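(* Let $A=\{v_1,v_2,\dots,v_n\}$ be a set of $n\geq 1$ distinct integers, and let $Y_1,Y_2,Y_3$ be independent random variables, each uniformly distributed on $A$. Set $Y=Y_1+Y_2+Y_3$. Then $$\max_{x\in \mathbb{Z}} \mathbb{P}[Y=x]\leq\frac{3+1/n^2}{4n}.$$ *)

From mathcomp Require Import all_boot all_order all_algebra.
Set Implicit Arguments. Unset Strict Implicit. Unset Printing Implicit Defensive.
Import Order.TTheory GRing.Theory Num.Theory.
Local Open Scope ring_scope.

(* Probability mass function of the uniform distribution on the finite set
   of integers A (given as a duplicate-free sequence): 1/|A| on A, 0 off A. *)
Definition unif_pmf (A : seq int) (a : int) : rat :=
  if a \in A then (size A)%:R^-1 else 0.

(* P[Y1 + Y2 + Y3 = x] for Y1, Y2, Y3 independent, each uniform on A: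
   by independence the joint pmf is the product of the marginal pmfs, and
   the event {Y = x} is summed over the (finite) support A^3. *)
Definition prob_sum3_eq (A : seq int) (x : int) : rat :=
  \sum_(a <- A) \sum_(b <- A) \sum_(c <- A)
     (if a + b + c == x then unif_pmf A a * unif_pmf A b * unif_pmf A c else 0).

From mathcomp Require Import all_boot all_order all_algebra.
From mathcomp Require Import zify ring lra.
Import Order.TTheory GRing.Theory Num.Theory.
Local Open Scope ring_scope.

(* With m(a) the number of b in A with x - a - b in A, n^3 P[Y = x] is the sum
   of the m(a).  For v < v' in A, inclusion-exclusion gives
   m(v) + m(v') <= n + r(v' - v), where r(d) counts the c in A with c - d in A.
   Every residue class mod d met by A contains an element c (its least one)
   with c - d outside A, and the elements of A in (v, v'] lie in distinct
   classes mod v' - v, so r(v' - v) <= n - #(A ∩ (v, v']).  Pairing the i-th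
   smallest element of A with the (n-1-i)-th one then yields
   2 sum_a m(a) <= 2n^2 - sum_i |n-1-2i| = 2n^2 - floor(n^2/2). *)

Definition rep_add (A : seq int) (y : int) : nat := count (fun b => y - b \in A) A.
Definition rep_sub (A : seq int) (d : int) : nat := count (fun c => c - d \in A) A.

Lemma ltn_count_lt (s : seq int) (u v : int) : u < v -> u \in s ->
  (count (fun a => (a < u)%R) s < count (fun a => (a < v)%R) s)%N.
Proof.
move=> lt_uv us; rewrite -[X in (_ < X)%N]size_filter.
rewrite -(count_predC (fun a => a < u)) !count_filter.
rewrite [X in (_ < X + _)%N](eq_count (a2 := fun a => a < u)); last first.
  by move=> a /=; case: (ltP a u) => // /lt_trans ->.
rewrite -[X in (X < _)%N]addn0 ltn_add2l -has_count; apply/hasP.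
by exists u; rewrite //= ltxx.
Qed.

Section ResidueClasses.
Variables (A : seq int) (D : int).
Hypothesis D_gt0 : 0 < D.

Lemma exists_chain_bottom c : c \in A ->
  exists2 b, (b \in A) && (b - D \notin A) & (b = c %[mod D])%Z.
Proof.
have [k] := ubnP (count (fun a => a < c) A); elim: k c => // k IH c lt_ck cA.
have [cDA | cDNA] := boolP (c - D \in A); last by exists c; rewrite ?cA.
have lt_cDc : c - D < c by rewrite ltrBlDr ltrDl.
have [b bP eq_b] := IH (c - D) (leq_trans (ltn_count_lt _ _ _ lt_cDc cDA) lt_ck) cDA.
by exists b; rewrite // eq_b -[in RHS](subrK D c) modzDr.
Qed.

Lemma rep_sub_add_le (W : seq int) : {subset W <= A} ->
  uniq [seq (w %% D)%Z | w <- W] -> (rep_sub A D + size W <= size A)%N.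
Proof.
move=> sWA uW; rewrite /rep_sub -(count_predC (fun c => c - D \in A) A) leq_add2l.
rewrite -size_filter -(size_map (modz^~ D) W) -(size_map (modz^~ D) (filter _ A)).
apply: uniq_leq_size => // _ /mapP[w /sWA wA ->].
have [b /andP[bA bDA] eq_b] := exists_chain_bottom _ wA.
by apply/mapP; exists b; rewrite // mem_filter /= bDA.
Qed.

End ResidueClasses.

Lemma eq_mod_window (v D w w' : int) : v < w <= v + D -> v < w' <= v + D ->
  (w = w' %[mod D])%Z -> w = w'.
Proof.
move=> /andP[vw wD] /andP[vw' w'D] /eqP; rewrite eqz_mod_dvd => /dvdzP[q eq_q].
have q0 : q = 0 by nia.
by move: eq_q; rewrite q0 mul0r; lia.
Qed.

Lemma rep_add_shift_le (A : seq int) (y d : int) : uniq A ->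
  (rep_add A y + rep_add A (y - d) <= size A + rep_sub A d)%N.
Proof.
move=> uA; rewrite /rep_add -count_predUI leq_add ?count_size //.
rewrite /rep_sub -!size_filter -(size_map (fun b => y - b)).
apply: uniq_leq_size.
  by rewrite map_inj_uniq ?filter_uniq // => b b' /addrI/oppr_inj.
move=> _ /mapP[b + ->]; rewrite !mem_filter /= => /andP[/andP[ybA ydbA] _].
by rewrite ybA addrAC ydbA.
Qed.

Lemma rep_add_pair_le (A : seq int) (y v v' : int) : uniq A -> v < v' ->
  (rep_add A (y - v) + rep_add A (y - v') + count (fun w => (v < w <= v')%R) A
     <= 2 * size A)%N.
Proof.
move=> uA lt_vv'; have d_gt0 : 0 < v' - v by rewrite subr_gt0.
have -> : y - v' = y - v - (v' - v) by ring.
apply: leq_trans (leq_add (rep_add_shift_le _ _ _ uA) (leqnn _)) _.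
rewrite -addnA mul2n -addnn leq_add2l -size_filter.
apply: rep_sub_add_le => //; first by move=> w; rewrite mem_filter => /andP[].
rewrite map_inj_in_uniq ?filter_uniq // => w w'.
rewrite !mem_filter => /andP[wI _] /andP[w'I _].
by apply: (eq_mod_window v (v' - v)); rewrite addrC subrK.
Qed.

Lemma count_between_nth (s : seq int) (k k' : nat) : sorted <%R s ->
  (k <= k')%N -> (k' < size s)%N ->
  count (fun w => (s`_k < w <= s`_k')%R) s = (k' - k)%N.
Proof.
move=> ss le_kk' lt_k's; have lt_ks := leq_ltn_trans le_kk' lt_k's.
have le_nth : s`_k <= s`_k' by rewrite lt_sorted_leq_nth.
have := count_predUI (fun w => w <= s`_k) (fun w => s`_k < w <= s`_k') s.
rewrite (eq_count (a2 := fun w => w <= s`_k')); last first.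
  by move=> w /=; case: leP => // w_le; rewrite (le_trans w_le le_nth).
rewrite [count (predI _ _) _](eq_count (a2 := pred0)); last by move=> w /=; case: leP.
by rewrite count_pred0 !count_le_nth //; lia.
Qed.

Lemma rep_add_rank_le (A s : seq int) (y : int) (k k' : nat) :
  sorted <%R s -> perm_eq s A -> (k < size s)%N -> (k' < size s)%N ->
  (rep_add A (y - s`_k) + rep_add A (y - s`_k') + `|k - k'| <= 2 * size A)%N.
Proof.
move=> ss sA; wlog le_kk' : k k' / (k <= k')%N => [wlog_le lt_ks lt_k's|].
  have [le_kk'|/ltnW le_k'k] := leqP k k'; first exact: wlog_le.
  by rewrite [X in (X + _ <= _)%N]addnC distnC wlog_le.
move=> lt_ks lt_k's; rewrite distnEr //.
have uA : uniq A by rewrite -(perm_uniq sA) lt_sorted_uniq.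
have [<- | ne_kk'] := eqVneq k k'.
  by rewrite subnn addn0 mul2n -addnn leq_add // count_size.
have lt_nth : s`_k < s`_k' by rewrite lt_sorted_ltn_nth // ltn_neqAle ne_kk'.
apply: leq_trans _ (rep_add_pair_le A y _ _ uA lt_nth).
by rewrite leq_add2l -(permP sA) count_between_nth.
Qed.

Lemma sum_dist_mirror n : (\sum_(0 <= i < n) `|i - (n - i.+1)|)%N = (n * n)./2.
Proof.
suff dist2 : forall n, (\sum_(0 <= i < n) `|i - (n - i.+1)|)%N = (n * n)./2 /\
   (\sum_(0 <= i < n.+1) `|i - (n - i)|)%N = (n.+1 * n.+1)./2 by case: (dist2 n).
elim=> [|k [IH1 IH2]]; first by rewrite !big_nat_recl // !big_geq.
split=> //; rewrite big_nat_recl // big_nat_recr //.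
rewrite (eq_big_nat _ _ (F2 := fun i => `|i - (k - i.+1)|)%N) ?IH1.
  by rewrite /=; lia.
by move=> i /andP[_ lt_ik]; lia.
Qed.

Lemma sum_rep_add_le (A : seq int) (x : int) : uniq A ->
  (4 * \sum_(a <- A) rep_add A (x - a) <= 3 * size A ^ 2 + 1)%N.
Proof.
move=> uA; set n := size A; set s := sort <=%O A.
have ss : sorted <%R s by rewrite sort_lt_sorted.
have sA : perm_eq s A by rewrite perm_sort.
have sz : size s = n by rewrite size_sort.
pose F i := rep_add A (x - s`_i).
have sumF : (\sum_(a <- A) rep_add A (x - a) = \sum_(0 <= i < n) F i)%N.
  by rewrite -(perm_big _ sA) (big_nth 0) sz.
have sum_mirror : (\sum_(0 <= i < n) F (n - i.+1) = \sum_(0 <= i < n) F i)%N.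
  by rewrite [RHS]big_nat_rev.
have pairs : (\sum_(0 <= i < n) (F i + F (n - i.+1) + `|i - (n - i.+1)|)
                <= \sum_(0 <= i < n) 2 * n)%N.
  rewrite big_seq [leqRHS]big_seq; apply: leq_sum => i; rewrite mem_index_iota => lt_in.
  by apply: rep_add_rank_le; rewrite // sz; lia.
rewrite sum_nat_const_nat !big_split /= sum_mirror sum_dist_mirror in pairs.
by rewrite sumF; lia.
Qed.

Lemma sumr_if_const (R : nmodType) (T : Type) (s : seq T) (P : pred T) (r : R) :
  \sum_(t <- s) (if P t then r else 0) = r *+ count P s.
Proof. by rewrite -big_mkcond big_const_seq iter_addr_0. Qed.

Lemma prob_sum3_eqE (A : seq int) (x : int) : uniq A ->
  prob_sum3_eq A x = (\sum_(a <- A) rep_add A (x - a))%:R / (size A)%:R ^+ 3.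
Proof.
move=> uA; set r := (size A)%:R^-1 : rat.
transitivity (\sum_(a <- A) r ^+ 3 *+ rep_add A (x - a)).
  apply: eq_big_seq => a aA; rewrite -sumr_if_const.
  apply: eq_big_seq => b bA; rewrite -mulrb -(count_uniq_mem _ uA) -sumr_if_const.
  apply: eq_big_seq => c cA; rewrite /unif_pmf aA bA cA -!expr2 -exprSr /=.
  by rewrite (_ : (a + b + c == x) = (c == x - a - b)) //; apply/eqP/eqP => ?; lia.
by rewrite sumrMnr /r exprVn mulrC mulr_natr.
Qed.

Theorem theorem2p4 (n : nat) (A : seq int) :
  (1 <= n)%N -> uniq A -> size A = n ->
  forall x : int,
    prob_sum3_eq A x <= (3 + (n%:R ^+ 2)^-1) / (4 * n%:R) :> rat.
Proof.
move=> n_gt0 uA sizeA x; rewrite prob_sum3_eqE // sizeA.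
have n_pos : (0 : rat) < n%:R by rewrite ltr0n.
have -> : (3 + (n%:R ^+ 2)^-1) / (4 * n%:R) = (3 * n%:R ^+ 2 + 1) / 4 / n%:R ^+ 3 :> rat.
  by field; rewrite lt0r_neq0.
rewrite ler_pM2r ?invr_gt0 ?exprn_gt0 // ler_pdivlMr //.
have := sum_rep_add_le A x uA; rewrite sizeA -(ler_nat rat) natrD !natrM; lra.
Qed.
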